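(* Let $\mathcal{C}$ be any category. Let $l : K \to L$, $r : K \to R$, monomorphisms $t_L : L \rightarrowtail L'$, $t_K : K \rightarrowtail K'$, and $l' : K' \to L'$ be such that $L \xleftarrow{l} K \xrightarrow{t_K} K'$ is a pullback of $L \xrightarrow{t_L} L' \xleftarrow{l'} K'$. Let $G_L$ be an object, $\alpha : G_L \to L'$ and $m : L \to G_L$ morphisms such that $L \xleftarrow{1_L} L \xrightarrow{m} G_L$ is a pullback of $L \xrightarrow{t_L} L' \xleftarrow{\alpha} G_L$, and let $G_L \xleftarrow{g_L} G_K \xrightarrow{u'} K'$ be a pullback of $G_L \xrightarrow{\alpha} L' \xleftarrow{l'} K'$. Then there is a unique morphism $v : K \to G_K$ such that $t_K = u' \circ v$. *)

Record Category : Type := {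
  Ob :> Type;
  Hom : Ob -> Ob -> Type;
  comp : forall {a b c : Ob}, Hom b c -> Hom a b -> Hom a c;
  idm : forall a : Ob, Hom a a;
  comp_assoc : forall (a b c d : Ob) (f : Hom c d) (g : Hom b c) (h : Hom a b),
      comp f (comp g h) = comp (comp f g) h;
  comp_id_l : forall (a b : Ob) (f : Hom a b), comp (idm b) f = f;
  comp_id_r : forall (a b : Ob) (f : Hom a b), comp f (idm a) = f
}.

Arguments Hom {C} : rename.
Arguments comp {C a b c} : rename.
Arguments idm {C} : rename.

Notation "g \o f" := (comp g f) (at level 40, left associativity).

Definition mono {C : Category} {A B : C} (f : Hom A B) : Prop :=
  forall (X : C) (g h : Hom X A), f \o g = f \o h -> g = h.

Definition is_pullback {C : Category} {A B Z P : C}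
    (f : Hom A Z) (g : Hom B Z) (p1 : Hom P A) (p2 : Hom P B) : Prop :=
  f \o p1 = g \o p2 /\
  forall (X : C) (x1 : Hom X A) (x2 : Hom X B),
    f \o x1 = g \o x2 ->
    exists! h : Hom X P, p1 \o h = x1 /\ p2 \o h = x2.


(* The morphism [v] is the mediating arrow of the pullback [G_K] for the
   commuting square [alpha \o (m \o l) = l' \o t_K].  For uniqueness, any
   [w] with [u' \o w = t_K] has [alpha \o (g_L \o w) = t_L \o l]; since
   [G_L] pulls [t_L] back to the identity of [L], this forces
   [g_L \o w = m \o l], and the two legs of a pullback are jointly monic. *)

Lemma pullback_jointly_mono {C : Category} {A B Z P : C}
    (f : Hom A Z) (g : Hom B Z) (p1 : Hom P A) (p2 : Hom P B) :
  is_pullback f g p1 p2 ->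
  forall (X : C) (h k : Hom X P), p1 \o h = p1 \o k -> p2 \o h = p2 \o k -> h = k.
Proof.
  intros [Hsq Huniv] X h k E1 E2.
  assert (Hcomm : f \o (p1 \o k) = g \o (p2 \o k)).
  { rewrite !comp_assoc, Hsq. reflexivity. }
  destruct (Huniv X (p1 \o k) (p2 \o k) Hcomm) as [u [_ Hu]].
  transitivity u.
  - symmetry. apply Hu. split; assumption.
  - apply Hu. split; reflexivity.
Qed.

Lemma pullback_idm_factor {C : Category} {A B Z : C}
    (f : Hom A Z) (g : Hom B Z) (p2 : Hom A B) :
  is_pullback f g (idm A) p2 ->
  forall (X : C) (x : Hom X B) (y : Hom X A), g \o x = f \o y -> x = p2 \o y.
Proof.
  intros [_ Huniv] X x y Hxy.
  destruct (Huniv X y x (eq_sym Hxy)) as [h [[Hh1 Hh2] _]].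
  rewrite comp_id_l in Hh1. subst h.
  symmetry. exact Hh2.
Qed.

Theorem lemma2 (C : Category) (K L R L' K' G_L G_K : C)
    (l : Hom K L) (r : Hom K R) (t_L : Hom L L') (t_K : Hom K K')
    (l' : Hom K' L')
    (Ht_L : mono t_L) (Ht_K : mono t_K)
    (Hpb1 : is_pullback t_L l' l t_K)
    (alpha : Hom G_L L') (m : Hom L G_L)
    (Hpb2 : is_pullback t_L alpha (idm L) m)
    (g_L : Hom G_K G_L) (u' : Hom G_K K')
    (Hpb3 : is_pullback alpha l' g_L u') :
  exists! v : Hom K G_K, t_K = u' \o v.
Proof.
  destruct Hpb1 as [Hsq1 _].
  assert (Htriangle : alpha \o m = t_L).
  { destruct Hpb2 as [Hsq2 _]. rewrite comp_id_r in Hsq2. symmetry. exact Hsq2. }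
  assert (Hsq : alpha \o (m \o l) = l' \o t_K).
  { rewrite comp_assoc, Htriangle. exact Hsq1. }
  pose proof Hpb3 as [Hsq3 Huniv3].
  destruct (Huniv3 K (m \o l) t_K Hsq) as [v [[Hv1 Hv2] _]].
  exists v. split; [symmetry; exact Hv2 |].
  intros w Hw.
  assert (Hgw : g_L \o w = m \o l).
  { apply (pullback_idm_factor t_L alpha m Hpb2).
    rewrite comp_assoc, Hsq3, <- comp_assoc, <- Hw. exact (eq_sym Hsq1). }
  apply (pullback_jointly_mono alpha l' g_L u' Hpb3).
  - rewrite Hv1. exact (eq_sym Hgw).
  - rewrite Hv2. exact Hw.
Qed.
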